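(* Fix constants $C,\delta>0$. Let $G=(V,E)$ be a proper graph on $n$ vertices (with $C_1=C_2=1$ and $K=2$) and let $N=(G,c)$ be the electrical network with unit conductance $c_{ij}=1$ on every edge. Let $x,y\in V$ be distinct boundary vertices with potentials $V_x=1$ and $V_y=0$. Then the potential distribution satisfies \[ V_i=\frac{d(x)}{d(x)+d(y)}+O\big((\ln n)^{-1}\big)\qquad\text{for each } i\in V\setminus\{x,y\}, \] where $d(v)$ denotes the degree of $v$ in $G$.
   Context: An electrical network $N=(G,c)$ on a simple graph $G=(V,E)$ assigns a conductance $c_{ij}=c_{ji}>0$ to each edge $(i,j)\in E$. Given a boundary set $\Gamma\subset V$ with prescribed values on $\Gamma$, the potential distribution is the function $V:V\to\mathbb{R}$ taking the prescribed values on $\Gamma$ and satisfying $\sum_{j:(i,j)\in E}c_{ij}(V_i-V_j)=0$ for every $i\in V\setminus\Gamma$. Let $G=(V,E)$ be a simple graph on $n$ vertices and let $0<C_1\le C_2$, $K\ge 1$, $C>0$, $\delta>0$ be constants. $G$ is called proper if: (P1) $G$ is connected. (P2) Calling a cycle short if its length is at most $\frac{\ln n}{10\ln\ln n}$, any two distinct short cycles are at distance at least $\frac{\ln n}{\ln\ln n}$. (P3) $G$ contains at least one cycle of length 3, one of length 5, and one of length 7. (P4) For every conductance assignment $c$ on $E$ with $C_1\le c_{ij}\le C_2$ for all $(i,j)\in E$, every $L\subset V$ with $|L|\le K$, and every nonempty $S\subset V\setminus L$ with $|S|\le n/2$, writing $G'=G[V\setminus L]=(V',E')$, $\bar S=V\setminus(L\cup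 S)$, $E_{G'}(S,\bar S)$ for the set of edges of $G'$ with one end in $S$ and the other in $\bar S$, and $c'_i=\sum_{j:(i,j)\in E'}c_{ij}$, one has $\dfrac{\sum_{(i,j)\in E_{G'}(S,\bar S)}c_{ij}}{\sum_{i\in S}c'_i}\ge \dfrac{C_1}{6C_2}$. (P5) Every vertex $i\in V$ has degree $d(i)$ satisfying $\delta C\ln n< d(i)<4C\ln n$. Asymptotic notation refers to $n\to\infty$; the implied constant depends only on $C,\delta$. *)

From Stdlib Require Import Reals.
From mathcomp Require Import all_boot.

Set Implicit Arguments.
Unset Strict Implicit.
Unset Printing Implicit Defensive.
Local Open Scope R_scope.

Definition simple_graph (n : nat) (adj : rel 'I_n) : Prop :=
  (forall i j, adj i j = adj j i) /\ (forall i, adj i i = false).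

Definition deg (n : nat) (adj : rel 'I_n) (i : 'I_n) : nat :=
  #|[set j | adj i j]|.

Notation "\rsum_ ( i | P ) F" := (\big[Rplus/R0]_(i | P) F)
  (at level 41, F at level 41, i at level 50).

Definition P1 (n : nat) (adj : rel 'I_n) : Prop :=
  forall i j : 'I_n, connect adj i j.

Definition is_cycle (n : nat) (adj : rel 'I_n) (s : seq 'I_n) : Prop :=
  [/\ uniq s, (3 <= size s)%N & cycle adj s].

(* Edge set of a cycle (as ordered pairs, both orientations). Two cycles are
   the same cycle iff they have the same edge set. *)
Definition cycle_edges (n : nat) (s : seq 'I_n) : {set 'I_n * 'I_n} :=
  [set p | (p.1 \in s) && ((next s p.1 == p.2) || (prev s p.1 == p.2))].

Definition dist_ge (n : nat) (adj : rel 'I_n) (A B : seq 'I_n) (D : R) : Prop :=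
  forall (u v : 'I_n) (p : seq 'I_n),
    u \in A -> v \in B -> path adj u p -> last u p = v ->
    D <= INR (size p).

Definition short_cycle (n : nat) (adj : rel 'I_n) (s : seq 'I_n) : Prop :=
  is_cycle adj s /\
  INR (size s) <= ln (INR n) / (10 * ln (ln (INR n))).

Definition P2 (n : nat) (adj : rel 'I_n) : Prop :=
  forall s1 s2 : seq 'I_n,
    short_cycle adj s1 -> short_cycle adj s2 ->
    cycle_edges s1 <> cycle_edges s2 ->
    dist_ge adj s1 s2 (ln (INR n) / ln (ln (INR n))).

Definition P3 (n : nat) (adj : rel 'I_n) : Prop :=
  (exists s, is_cycle adj s /\ (size s = 3)%N) /\
  (exists s, is_cycle adj s /\ (size s = 5)%N) /\
  (exists s, is_cycle adj s /\ (size s = 7)%N).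

(* (P4), with the ratio inequality written in cross-multiplied form. *)
Definition P4 (n : nat) (adj : rel 'I_n) (C1 C2 : R) (K : nat) : Prop :=
  forall (c : 'I_n -> 'I_n -> R),
    (forall i j, c i j = c j i) ->
    (forall i j, adj i j -> (C1 <= c i j <= C2)) ->
  forall (L S : {set 'I_n}),
    (#|L| <= K)%N -> S != set0 -> [disjoint S & L] -> (2 * #|S| <= n)%N ->
    (C1 / (6 * C2) *
       (\rsum_(i | i \in S) \rsum_(j | (j \notin L) && adj i j) c i j)
     <= (\rsum_(i | i \in S)
          \rsum_(j | (j \notin L) && (j \notin S) && adj i j) c i j)).

Definition P5 (n : nat) (adj : rel 'I_n) (C delta : R) : Prop :=
  forall i : 'I_n,
    delta * C * ln (INR n) < INR (deg adj i) < 4 * C * ln (INR n).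

Definition proper_graph (n : nat) (adj : rel 'I_n)
    (C1 C2 : R) (K : nat) (C delta : R) : Prop :=
  [/\ P1 adj, P2 adj, P3 adj, P4 adj C1 C2 K & P5 adj C delta].

Definition unit_potential (n : nat) (adj : rel 'I_n) (x y : 'I_n)
    (V : 'I_n -> R) : Prop :=
  [/\ V x = 1, V y = 0 &
      forall i, i != x -> i != y ->
        \rsum_(j | adj i j) (1 * (V i - V j)) = 0].

From HB Require Import structures.
From Stdlib Require Import Reals Psatz.
From mathcomp Require Import all_boot zify.
Set Implicit Arguments.
Unset Strict Implicit.
Local Open Scope R_scope.

(* Write L = {x, y}, G - L for the graph with x and y deleted and d'(i) for
   the degrees in G - L.  Only (P1), (P4) and (P5) are used.
   1. Maximum principle (P1): 0 <= V <= 1.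
   2. Poincare inequality (P4): edge expansion of G - L yields, through a
      discrete coarea argument, for a median m of V off L,
        sum_(i~j in G-L) (V i - m)^2 <= 144 sum_(i~j in G-L) (V i - V j)^2.
   3. Energy: testing Kirchhoff's law against V - m bounds the Dirichlet
      energy of V on G - L by the edges to x and y; with 2 and (P5) it is
      O(1), and so is the weighted variance sum_i d'(i) (V i - m)^2.
   4. Vertex estimate: V i - m is the average of the neighbours' deviations,
      so |V i - m| = O(1 / ln n) at every vertex off L.
   5. Flow conservation (current out of x = current into y) pins
      m to d(x) / (d(x) + d(y)) up to O(1 / ln n). *)

HB.instance Definition _ := Monoid.isComLaw.Build R R0 Rplus
  (fun a b c => esym (Rplus_assoc a b c)) Rplus_comm Rplus_0_l.
HB.instance Definition _ := Monoid.isComLaw.Build R R1 Rmult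
  (fun a b c => esym (Rmult_assoc a b c)) Rmult_comm Rmult_1_l.
HB.instance Definition _ := Monoid.isMulLaw.Build R R0 Rmult Rmult_0_l Rmult_0_r.
HB.instance Definition _ :=
  Monoid.isAddLaw.Build R Rmult Rplus Rmult_plus_distr_r Rmult_plus_distr_l.

Section RealSums.
Variable I : finType.

(* Basic rules for finite sums of reals, stated with the real operations
   explicitly so that they rewrite syntactically. *)
Lemma rsum_le (P : pred I) (F G : I -> R) :
  (forall i, P i -> F i <= G i) -> \rsum_(i | P i) F i <= \rsum_(i | P i) G i.
Proof. by move=> FG; apply: (big_ind2 (fun a b => a <= b)) => [|*|*]; [lra|lra|apply: FG]. Qed.

Lemma rsum_ge0 (P : pred I) (F : I -> R) :
  (forall i, P i -> 0 <= F i) -> 0 <= \rsum_(i | P i) F i.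
Proof. by move=> F0; apply: (big_ind (fun a => 0 <= a)) => [|*|*]; [lra|lra|apply: F0]. Qed.

Lemma rsum_abs (P : pred I) (F : I -> R) :
  Rabs (\rsum_(i | P i) F i) <= \rsum_(i | P i) Rabs (F i).
Proof.
apply: (big_ind2 (fun a b => Rabs a <= b)) => [|a1 a2 b1 b2 H1 H2|i _].
- by rewrite Rabs_R0; lra.
- by have := Rabs_triang a1 b1; lra.
- exact: Rle_refl.
Qed.

Lemma rsum_add (P : pred I) (F G : I -> R) :
  \rsum_(i | P i) (F i + G i) = \rsum_(i | P i) F i + \rsum_(i | P i) G i.
Proof. exact: big_split. Qed.

Lemma rsum_opp (P : pred I) (F : I -> R) :
  \rsum_(i | P i) (- F i) = - \rsum_(i | P i) F i.
Proof. by rewrite (big_morph Ropp Ropp_plus_distr Ropp_0). Qed.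

Lemma rsum_sub (P : pred I) (F G : I -> R) :
  \rsum_(i | P i) (F i - G i) = \rsum_(i | P i) F i - \rsum_(i | P i) G i.
Proof. by rewrite /Rminus rsum_add rsum_opp. Qed.

Lemma rsum_scal (P : pred I) (c : R) (F : I -> R) :
  \rsum_(i | P i) (c * F i) = c * \rsum_(i | P i) F i.
Proof. by rewrite big_distrr. Qed.

Lemma rsum_const (P : pred I) (c : R) : \rsum_(i | P i) c = c * \rsum_(i | P i) 1.
Proof. by rewrite -rsum_scal; apply: eq_bigr => i _; ring. Qed.

Lemma rsum_card (P : pred I) : \rsum_(i | P i) 1 = INR #|[set i | P i]|.
Proof.
rewrite cardsE -sum1_card.
by rewrite (big_morph INR (fun a b => plus_INR a b) (erefl (INR 0))).
Qed.

Lemma rsum_ge0_eq0 (P : pred I) (F : I -> R) :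
  (forall i, P i -> 0 <= F i) -> \rsum_(i | P i) F i = 0 ->
  forall i, P i -> F i = 0.
Proof.
move=> F0 S0 i Pi; rewrite (bigD1 i) //= in S0.
have : 0 <= \rsum_(j | P j && (j != i)) F j by apply: rsum_ge0 => j /andP[/F0].
by have := F0 i Pi; lra.
Qed.

Lemma rsum_sub_le (P : pred I) (Q : pred I) (F : I -> R) :
  (forall i, 0 <= F i) -> \rsum_(i | P i && Q i) F i <= \rsum_(i | P i) F i.
Proof.
move=> F0; rewrite big_mkcondr; apply: rsum_le => i _.
by case: (Q i); [lra | apply: F0].
Qed.

End RealSums.

Definition rltb (a b : R) : bool := if Rlt_dec a b then true else false.

Lemma rltbP a b : reflect (a < b) (rltb a b).
Proof. by rewrite /rltb; case: Rlt_dec => H; constructor. Qed.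

Lemma argmax (T : finType) (A : {set T}) (f : T -> R) : A != set0 ->
  exists2 k, k \in A & forall j, j \in A -> f j <= f k.
Proof.
case/set0Pn => a aA.
suff [k kA Hk] : exists2 k, k \in enum A & forall j, j \in enum A -> f j <= f k.
  by exists k => [|j jA]; [rewrite -mem_enum | apply: Hk; rewrite mem_enum].
have : enum A != [::] by apply/eqP => E; have := mem_enum A a; rewrite E aA.
elim: (enum A) => [//|b s IH] _.
have [->|/IH [k ks Hk]] := eqVneq s [::].
  by exists b => [|j]; rewrite ?mem_head // inE => /eqP ->; apply: Rle_refl.
case: (Rle_dec (f b) (f k)) => fbk.
  by exists k => [|j]; rewrite inE ?ks ?orbT // => /orP[/eqP ->|/Hk].
by exists b => [|j]; rewrite ?mem_head // inE => /orP[/eqP ->|/Hk]; lra.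
Qed.

Lemma argmin (T : finType) (A : {set T}) (f : T -> R) : A != set0 ->
  exists2 k, k \in A & forall j, j \in A -> f k <= f j.
Proof.
by move=> /(argmax (fun j => - f j)) [k kA Hk]; exists k => // j /Hk; lra.
Qed.

(* Maximum principle: on a connected graph, a function harmonic at every
   vertex other than x and y is bounded above by its values at x and y;
   the set where the maximum is attained is closed under adjacency. *)
Lemma max_principle n (adj : rel 'I_n) (x y : 'I_n) (W : 'I_n -> R) :
  P1 adj ->
  (forall i, i != x -> i != y -> \rsum_(j | adj i j) (W i - W j) = 0) ->
  forall i, W i <= Rmax (W x) (W y).
Proof.
move=> conn harm i.
have [k _ Wk] : exists2 k, k \in [set: 'I_n] & forall j, j \in [set: 'I_n] -> W j <= W k.
  by apply: argmax; apply/set0Pn; exists i.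
case: (Rle_dec (W k) (Rmax (W x) (W y))) => [|Wbig]; first by have := Wk i (in_setT i); lra.
have Wx := Rmax_l (W x) (W y); have Wy := Rmax_r (W x) (W y).
have spread z z' : W z = W k -> adj z z' -> W z' = W k.
  move=> Wz zz'.
  have zx : z != x by apply/eqP => zx; rewrite zx in Wz; lra.
  have zy : z != y by apply/eqP => zy; rewrite zy in Wz; lra.
  have drop j : adj z j -> 0 <= W z - W j by have := Wk j (in_setT j); lra.
  by have := rsum_ge0_eq0 drop (harm z zx zy) zz'; lra.
have [p kp xk] := connectP (conn k x).
suff : W (last k p) = W k by rewrite -xk; lra.
have walk z : W z = W k -> path adj z p -> W (last z p) = W k.
  by elim: p {kp xk} z => [//|z' p IH] z Wz /= /andP[zz' /(IH z' (spread z z' Wz zz'))].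
exact: walk.
Qed.

(* Sums over the ordered edges (i, j) of the graph G - L obtained by
   deleting a vertex set L. *)
Section EdgeSums.
Variables (n : nat) (adj : rel 'I_n) (L : {set 'I_n}).

Definition edge_sum (F : 'I_n -> 'I_n -> R) : R :=
  \rsum_(i | i \notin L) \rsum_(j | (j \notin L) && adj i j) F i j.

Definition ideg (i : 'I_n) : R := \rsum_(j | (j \notin L) && adj i j) 1.

Lemma edge_sum_le (F G : 'I_n -> 'I_n -> R) :
  (forall i j, i \notin L -> j \notin L -> adj i j -> F i j <= G i j) ->
  edge_sum F <= edge_sum G.
Proof.
by move=> FG; apply: rsum_le => i iL; apply: rsum_le => j /andP[jL ij]; apply: FG.
Qed.

Lemma edge_sum_ge0 (F : 'I_n -> 'I_n -> R) :
  (forall i j, i \notin L -> j \notin L -> adj i j -> 0 <= F i j) ->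
  0 <= edge_sum F.
Proof.
by move=> F0; apply: rsum_ge0 => i iL; apply: rsum_ge0 => j /andP[jL ij]; apply: F0.
Qed.

Lemma edge_sum_ext (F G : 'I_n -> 'I_n -> R) :
  (forall i j, i \notin L -> j \notin L -> adj i j -> F i j = G i j) ->
  edge_sum F = edge_sum G.
Proof.
by move=> FG; apply: eq_bigr => i iL; apply: eq_bigr => j /andP[jL ij]; apply: FG.
Qed.

Lemma edge_sumD (F G : 'I_n -> 'I_n -> R) :
  edge_sum (fun i j => F i j + G i j) = edge_sum F + edge_sum G.
Proof. by rewrite /edge_sum -rsum_add; apply: eq_bigr => i _; rewrite rsum_add. Qed.

Lemma edge_sumZ (c : R) (F : 'I_n -> 'I_n -> R) :
  edge_sum (fun i j => c * F i j) = c * edge_sum F.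
Proof. by rewrite /edge_sum -rsum_scal; apply: eq_bigr => i _; rewrite rsum_scal. Qed.

Lemma edge_sum_vertex (f : 'I_n -> R) :
  edge_sum (fun i _ => f i) = \rsum_(i | i \notin L) (ideg i * f i).
Proof. by apply: eq_bigr => i _; rewrite rsum_const Rmult_comm. Qed.

Hypothesis adj_sym : forall i j, adj i j = adj j i.

(* Each undirected edge is counted in both orientations. *)
Lemma edge_sum_swap (F : 'I_n -> 'I_n -> R) :
  edge_sum F = edge_sum (fun i j => F j i).
Proof.
rewrite /edge_sum (exchange_big_dep (fun j => j \notin L)) /=; last by move=> i j _ /andP[].
by apply: eq_bigr => j jL; apply: eq_bigl => i; rewrite jL adj_sym.
Qed.

End EdgeSums.

Section Expansion.
Variables (n : nat) (adj : rel 'I_n) (L : {set 'I_n}).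

Definition cut_size (S : {set 'I_n}) : R :=
  \rsum_(i | i \in S) \rsum_(j | (j \notin L) && (j \notin S) && adj i j) 1.

(* Edge expansion: every nonempty S off L with at most half of the vertices
   has at least a sixth of its volume in G - L on its boundary; this is
   (P4) for unit conductances. *)
Definition expands : Prop :=
  forall S : {set 'I_n}, S != set0 -> [disjoint S & L] -> (2 * #|S| <= n)%N ->
    1/6 * (\rsum_(i | i \in S) ideg adj L i) <= cut_size S.

Lemma rsum_off_in (T : {set 'I_n}) (G : 'I_n -> R) : [disjoint T & L] ->
  \rsum_(i | i \notin L) (if i \in T then G i else 0) = \rsum_(i | i \in T) G i.
Proof.
move=> TL; rewrite -big_mkcondr; apply: eq_bigl => i.
by case iT: (i \in T); rewrite ?andbF //= (disjointFr TL iT).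
Qed.

Lemma edge_sum_level (T : {set 'I_n}) (c : R) : [disjoint T & L] ->
  edge_sum adj L (fun i _ => if i \in T then c else 0) =
  c * \rsum_(i | i \in T) ideg adj L i.
Proof.
move=> TL; rewrite edge_sum_vertex -rsum_scal -(rsum_off_in _ TL).
by apply: eq_bigr => i _; case: (i \in T); rewrite /= ?Rmult_0_r // Rmult_comm.
Qed.

Lemma edge_sum_cut (T : {set 'I_n}) (c : R) : [disjoint T & L] ->
  edge_sum adj L (fun i j => if (i \in T) && (j \notin T) then c else 0) =
  c * cut_size T.
Proof.
move=> TL; rewrite /cut_size -rsum_scal -(rsum_off_in _ TL); apply: eq_bigr => i _.
case: (i \in T) => /=; last by rewrite big1.
rewrite -rsum_scal [LHS]big_mkcond [RHS]big_mkcond; apply: eq_bigr => j _ /=.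
by case: (j \in L) (j \in T) (adj i j) => [] [] [] /=; ring.
Qed.

Definition supp (h : 'I_n -> R) : {set 'I_n} := [set j | rltb 0 (h j)].

Lemma supp_zero (h : 'I_n -> R) j : (forall j, 0 <= h j) -> j \notin supp h -> h j = 0.
Proof. by move=> h0; rewrite inE => /rltbP; have := h0 j; lra. Qed.

Lemma edge_sum_add_level (T : {set 'I_n}) (mu : R) (g h : 'I_n -> R) :
  [disjoint T & L] -> 0 <= mu -> (forall j, 0 <= g j) ->
  (forall j, j \notin T -> g j = 0) ->
  (forall j, h j = g j + (if j \in T then mu else 0)) ->
  edge_sum adj L (fun i _ => h i) =
    edge_sum adj L (fun i _ => g i) + mu * (\rsum_(i | i \in T) ideg adj L i) /\
  edge_sum adj L (fun i j => Rmax (h i - h j) 0) =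
    edge_sum adj L (fun i j => Rmax (g i - g j) 0) + mu * cut_size T.
Proof.
move=> TL mu0 g0 gT hg; split.
  by rewrite -(edge_sum_level _ TL) -edge_sumD; apply: edge_sum_ext => i j _ _ _.
rewrite -(edge_sum_cut _ TL) -edge_sumD; apply: edge_sum_ext => i j _ _ _.
rewrite !hg; have gi0 := g0 i; have gj0 := g0 j.
case iT: (i \in T); case jT: (j \in T);
  try rewrite (gT i (negbT iT)); try rewrite (gT j (negbT jT));
  rewrite /= /Rmax; repeat case: Rle_dec; lra.
Qed.

Lemma coarea_null (h : 'I_n -> R) : (forall j, 0 <= h j) -> supp h = set0 ->
  1/6 * edge_sum adj L (fun i _ => h i) <=
  edge_sum adj L (fun i j => Rmax (h i - h j) 0).
Proof.
move=> h0 S0; have -> : edge_sum adj L (fun i _ => h i) = 0.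
  rewrite (@edge_sum_ext _ _ _ _ (fun _ _ => 0)) => [|i j _ _ _]; last first.
    by apply: supp_zero; rewrite // S0 inE.
  by rewrite /edge_sum big1 // => i _; rewrite big1.
by rewrite Rmult_0_r; apply: edge_sum_ge0 => i j _ _ _; apply: Rmax_r.
Qed.

Hypothesis expansion : expands.

(* By induction on
   the support T: h is h' + mu 1_T, with mu the minimal positive value and
   h' supported in T minus a point; the expansion of T handles mu 1_T. *)
Lemma coarea (h : 'I_n -> R) :
  (forall j, 0 <= h j) -> [disjoint supp h & L] -> (2 * #|supp h| <= n)%N ->
  1/6 * edge_sum adj L (fun i _ => h i) <=
  edge_sum adj L (fun i j => Rmax (h i - h j) 0).
Proof.
move: {2}#|supp h| (leqnn #|supp h|) => k; elim: k h => [|k IH] h supp_k h0 hL h2.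
  by apply: coarea_null => //; apply/cards0_eq; lia.
set T := supp h in supp_k hL h2 *.
have [/eqP T0 | T0] := boolP (T == set0); first exact: coarea_null.
have [k0 k0T min_k0] := argmin h T0.
set mu := h k0 in min_k0 *.
have mu0 : 0 < mu by move: k0T; rewrite inE => /rltbP.
pose h' j := if j \in T then h j - mu else 0.
have h'0 j : 0 <= h' j by rewrite /h'; case: ifP => [/min_k0 ?|_]; lra.
have h'T j : j \notin T -> h' j = 0 by rewrite /h' => /negbTE ->.
have hdec j : h j = h' j + (if j \in T then mu else 0).
  by rewrite /h'; case: ifP => jT; [ring | rewrite supp_zero ?jT //; ring].
have supp' : supp h' \subset T :\ k0.
  apply/subsetP => j; rewrite [j \in T :\ k0]inE [j \in supp h']inE /h' => /rltbP.
  case: ifP => jT; last lra.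
  by rewrite andbT in_set1 => pos; apply/eqP => jk0; move: pos; rewrite jk0 /mu; lra.
have card' : (#|supp h'| <= k)%N.
  move: supp_k; rewrite (cardsD1 k0 T) k0T add1n ltnS.
  by apply: leq_trans; apply: subset_leq_card.
have suppT : supp h' \subset T := subset_trans supp' (subD1set T k0).
have h'2 : (2 * #|supp h'| <= n)%N.
  by apply: leq_trans h2; rewrite leq_mul2l subset_leq_card ?orbT.
have := IH h' card' h'0 (disjointWl suppT hL) h'2.
have := expansion T0 hL h2.
have [-> ->] := edge_sum_add_level hL (Rlt_le _ _ mu0) h'0 h'T hdec.
by nra.
Qed.

End Expansion.

(* Pointwise inequality turning the coarea inequality for a^2 into one for
   the squared increments of a. *)
Lemma sq_diff_pos_le (a b : R) : 0 <= a -> 0 <= b ->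
  Rmax (a ^ 2 - b ^ 2) 0 <= 12 * (a - b) ^ 2 + 1/24 * (a ^ 2 + b ^ 2).
Proof.
move=> a0 b0; apply: Rmax_lub.
  by have := pow2_ge_0 (a - b - (a + b) / 24); nra.
by have := pow2_ge_0 (a - b); have := pow2_ge_0 a; have := pow2_ge_0 b; lra.
Qed.

Lemma pos_neg_parts (u u' : R) :
  Rmax u 0 ^ 2 + Rmax (- u) 0 ^ 2 = u ^ 2 /\
  (Rmax u 0 - Rmax u' 0) ^ 2 + (Rmax (- u) 0 - Rmax (- u') 0) ^ 2 <= (u - u') ^ 2.
Proof. by rewrite /Rmax; split; repeat case: Rle_dec => ?; nra. Qed.

Section Poincare.
Variables (n : nat) (adj : rel 'I_n) (L : {set 'I_n}).
Hypotheses (adj_sym : forall i j, adj i j = adj j i) (expansion : expands adj L).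

Lemma sq_poincare (a : 'I_n -> R) :
  (forall j, 0 <= a j) -> [disjoint supp a & L] -> (2 * #|supp a| <= n)%N ->
  edge_sum adj L (fun i _ => a i ^ 2) <=
  144 * edge_sum adj L (fun i j => (a i - a j) ^ 2).
Proof.
move=> a0 aL a2.
have supp_sq : supp (fun j => a j ^ 2) = supp a.
  apply/setP => j; rewrite !inE; have := a0 j.
  by case: (rltbP 0 (a j)) => ?; case: rltbP => ? //; nra.
have := coarea expansion (fun j => pow2_ge_0 (a j)); rewrite supp_sq => /(_ aL a2) co.
have amgm : edge_sum adj L (fun i j => Rmax (a i ^ 2 - a j ^ 2) 0) <=
    edge_sum adj L (fun i j => 12 * (a i - a j) ^ 2 + (1/24 * a i ^ 2 + 1/24 * a j ^ 2)).
  by apply: edge_sum_le => i j _ _ _; have := sq_diff_pos_le (a0 i) (a0 j); lra.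
rewrite !edge_sumD !edge_sumZ -(edge_sum_swap L adj_sym (fun i j => a i ^ 2)) in amgm.
lra.
Qed.

(* For any V and any level m with at most half of the vertices above m and at
   most half below m (off L): apply sq_poincare to (V - m)^+ and (V - m)^-. *)
Lemma poincare (V : 'I_n -> R) (m : R) :
  (2 * #|[set j in ~: L | rltb m (V j)]| <= n)%N ->
  (2 * #|[set j in ~: L | rltb (V j) m]| <= n)%N ->
  edge_sum adj L (fun i _ => (V i - m) ^ 2) <=
  144 * edge_sum adj L (fun i j => (V i - V j) ^ 2).
Proof.
move=> above below.
pose part (s : R) j := if j \in L then 0 else Rmax (s * (V j - m)) 0.
have part0 s j : 0 <= part s j by rewrite /part; case: ifP => _; [lra | apply: Rmax_r].
have part_ok s (P : {set 'I_n}) : (2 * #|P| <= n)%N ->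
    (forall j, j \notin L -> 0 < s * (V j - m) -> j \in P) ->
    edge_sum adj L (fun i _ => part s i ^ 2) <=
    144 * edge_sum adj L (fun i j => (part s i - part s j) ^ 2).
  move=> halfP inP.
  have supp_part j : j \in supp (part s) -> (j \notin L) && (j \in P).
    rewrite inE /part; case: ifP => jL /rltbP /=; first lra.
    by rewrite /Rmax; case: Rle_dec => ? ?; [lra | apply: inP; [rewrite jL | lra]].
  apply: sq_poincare; first exact: part0.
    by rewrite disjoint_subset; apply/subsetP => j /supp_part /andP[]; rewrite inE.
  apply: leq_trans halfP; rewrite leq_mul2l subset_leq_card ?orbT //.
  by apply/subsetP => j /supp_part /andP[].
have above_in j : j \notin L -> 0 < 1 * (V j - m) -> j \in [set j in ~: L | rltb m (V j)].
  by move=> jL ?; rewrite !inE jL; apply/rltbP; lra.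
have below_in j : j \notin L -> 0 < -1 * (V j - m) -> j \in [set j in ~: L | rltb (V j) m].
  by move=> jL ?; rewrite !inE jL; apply/rltbP; lra.
have split_sq : edge_sum adj L (fun i _ => (V i - m) ^ 2) =
    edge_sum adj L (fun i _ => part 1 i ^ 2) + edge_sum adj L (fun i _ => part (-1) i ^ 2).
  rewrite -edge_sumD; apply: edge_sum_ext => i j /negbTE iL _ _.
  rewrite /part iL Rmult_1_l -Ropp_mult_distr_l Rmult_1_l.
  by case: (pos_neg_parts (V i - m) 0).
have split_diff : edge_sum adj L (fun i j => (part 1 i - part 1 j) ^ 2) +
    edge_sum adj L (fun i j => (part (-1) i - part (-1) j) ^ 2) <=
    edge_sum adj L (fun i j => (V i - V j) ^ 2).
  rewrite -edge_sumD; apply: edge_sum_le => i j /negbTE iL /negbTE jL _.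
  rewrite /part iL jL !Rmult_1_l -!Ropp_mult_distr_l !Rmult_1_l.
  have -> : V i - V j = V i - m - (V j - m) by ring.
  by case: (pos_neg_parts (V i - m) (V j - m)).
have := part_ok 1 _ above above_in; have := part_ok (-1) _ below below_in.
lra.
Qed.

End Poincare.

(* Take k minimal
   among the points with at least half of U at or below them. *)
Lemma median n (U : {set 'I_n}) (V : 'I_n -> R) : U != set0 ->
  exists2 k, k \in U &
    (2 * #|[set j in U | rltb (V k) (V j)]| <= #|U|)%N /\
    (2 * #|[set j in U | rltb (V j) (V k)]| <= #|U|)%N.
Proof.
move=> U0.
pose below k := [set j in U | ~~ rltb (V k) (V j)].
pose G := [set k in U | (#|U| <= 2 * #|below k|)%N].
have G0 : G != set0.
  have [kM kU maxM] := argmax V U0.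
  apply/set0Pn; exists kM; rewrite inE kU /=.
  suff -> : below kM = U by lia.
  apply/setP => j; rewrite !inE; case jU: (j \in U) => //=.
  by apply/rltbP; have := maxM j jU; lra.
have [k0 k0G min_k0] := argmin V G0.
move: (k0G); rewrite inE => /andP[k0U k0big].
exists k0 => //; split.
  have := cardsID [set j | rltb (V k0) (V j)] U.
  rewrite (_ : U :&: _ = [set j in U | rltb (V k0) (V j)]); last first.
    by apply/setP => j; rewrite !inE.
  rewrite (_ : U :\: _ = below k0); last by apply/setP => j; rewrite !inE andbC.
  by move: k0big; set a := #|[set j in U | _]|; set b := #|below k0|; set c := #|U|; lia.
set Lt := [set j in U | rltb (V j) (V k0)].
case: (leqP (2 * #|Lt|) #|U|) => // Lt_big.
have Lt0 : Lt != set0 by apply/eqP => Lt0; rewrite Lt0 cards0 in Lt_big.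
have [k1 k1Lt max_k1] := argmax V Lt0.
move: (k1Lt); rewrite inE => /andP[k1U /rltbP k1k0].
have Lt_below : Lt \subset below k1.
  apply/subsetP => j jLt; move: (jLt); rewrite !inE => /andP[-> _] /=.
  by apply/rltbP; have := max_k1 j jLt; lra.
have k1G : k1 \in G.
  rewrite inE k1U /=; have := subset_leq_card Lt_below; move: Lt_big.
  by set a := #|Lt|; set b := #|below k1|; set c := #|U|; lia.
by have := min_k0 k1 k1G; lra.
Qed.

(* Young's inequality, specialised to a boundary weight w in {0, 1, 2}
   and a degree d >= D. *)
Lemma amgm_boundary (w a D d : R) : 0 < D -> D <= d -> 0 <= w -> w ^ 2 <= 2 * w ->
  w * Rabs a <= 288 / D * w + d * a ^ 2 / 576.
Proof.
move=> D0 Dd w0 w2.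
have a2 : Rabs a ^ 2 = a ^ 2 by rewrite -Rsqr_pow2 -Rsqr_abs Rsqr_pow2.
have iD : 0 < / D by apply: Rinv_0_lt_compat.
have amgm : w * Rabs a <= 144 * w ^ 2 / D + D * a ^ 2 / 576.
  have e : 144 * w ^ 2 / D + D * Rabs a ^ 2 / 576 - w * Rabs a =
           (12 * w - D * Rabs a / 24) ^ 2 / D by field; lra.
  have : 0 <= (12 * w - D * Rabs a / 24) ^ 2 / D.
    by apply: Rle_mult_inv_pos => //; apply: pow2_ge_0.
  by rewrite a2 in e; lra.
have : 144 * w ^ 2 / D <= 288 / D * w by rewrite /Rdiv; nra.
have : D * a ^ 2 / 576 <= d * a ^ 2 / 576 by have := pow2_ge_0 a; nra.
lra.
Qed.

Lemma abs_le_sq (a l : R) : 0 < l -> Rabs a <= 1 / (2 * l) + l * a ^ 2 / 2.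
Proof.
move=> l0; have a2 : Rabs a ^ 2 = a ^ 2 by rewrite -Rsqr_pow2 -Rsqr_abs Rsqr_pow2.
have sq := pow2_ge_0 (l * Rabs a - 1).
have -> : 1 / (2 * l) = / (2 * l) by field; lra.
have il : 0 < / (2 * l) by apply: Rinv_0_lt_compat; lra.
have : 2 * l * / (2 * l) = 1 by field; lra.
nra.
Qed.

Lemma scaled_vertex_bound (d a l X c : R) :
  0 < l -> 0 < c -> c * l < d -> 0 <= a -> 0 <= X ->
  d * a <= 2 + d / (2 * l) + X / c -> a <= (2 / c + 1 / 2 + X / c ^ 2) / l.
Proof.
move=> l0 c0 cld a0 X0 da.
have d0 : 0 < d by nra.
have split_a : a <= (2 + X / c) / d + 1 / (2 * l).
  apply: (Rmult_le_reg_l d) => //.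
  have -> : d * ((2 + X / c) / d + 1 / (2 * l)) = 2 + d / (2 * l) + X / c by field; lra.
  exact: da.
have shrink : (2 + X / c) / d <= (2 + X / c) / (c * l).
  apply: Rmult_le_compat_l; last by apply: Rinv_le_contravar; nra.
  have : 0 <= X / c by apply: Rle_mult_inv_pos.
  lra.
have -> : (2 / c + 1 / 2 + X / c ^ 2) / l = (2 + X / c) / (c * l) + 1 / (2 * l) by field; lra.
lra.
Qed.

Lemma ratio_estimate (v m dx s a eps : R) :
  0 < s -> 0 <= a <= 1 -> 0 <= m <= 1 -> 0 <= eps ->
  Rabs (v - m) <= eps -> Rabs (dx - m * s) <= s * eps ->
  Rabs (v - (dx + a) / (s + 2 * a)) <= 2 * eps + 1 / s.
Proof.
move=> s0 [a0 a1] [m0 m1] eps0 vm dxm.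
have s2a : 0 < s + 2 * a by lra.
set t := (dx + a) / (s + 2 * a).
have scaled : (s + 2 * a) * Rabs (m - t) <= s * eps + a.
  have -> : (s + 2 * a) * Rabs (m - t) = Rabs ((m * s - dx) + a * (2 * m - 1)).
    rewrite -(Rabs_pos_eq _ (Rlt_le _ _ s2a)) -Rabs_mult; congr Rabs.
    by rewrite /t; field; lra.
  apply: Rle_trans (Rabs_triang _ _) _; rewrite Rabs_minus_sym in dxm.
  have : Rabs (a * (2 * m - 1)) <= a by rewrite Rabs_mult Rabs_pos_eq //; split_Rabs; nra.
  lra.
have mt : Rabs (m - t) <= eps + 1 / s.
  apply: (Rmult_le_reg_l (s + 2 * a)) => //.
  have -> : (s + 2 * a) * (eps + 1 / s) = s * eps + 2 * a * eps + 1 + 2 * a / s by field; lra.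
  have : 0 <= 2 * a / s by apply: Rle_mult_inv_pos; lra.
  nra.
have := Rabs_triang (v - m) (m - t); rewrite (_ : v - m + (m - t) = v - t); [lra | ring].
Qed.

Lemma unit_expansion n (adj : rel 'I_n) (L : {set 'I_n}) :
  P4 adj 1 1 2 -> (#|L| <= 2)%N -> expands adj L.
Proof.
move=> HP4 L2 S S0 SL S2.
have unit_c i j : adj i j -> 1 <= 1 <= 1 by move=> _; split; apply: Rle_refl.
have := HP4 (fun _ _ => 1) (fun _ _ => erefl) unit_c L S L2 S0 SL S2.
by rewrite Rmult_1_r.
Qed.

(* The constant in the O(1/l) closeness of V to its median (step 4). *)
Definition closeness_constant (c K : R) : R := 2 / c + 1 / 2 + 663552 * K / c / c ^ 2.

Section UnitNetwork.
Variables (n : nat) (adj : rel 'I_n) (x y : 'I_n) (V : 'I_n -> R).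
Hypotheses (adj_sym : forall i j, adj i j = adj j i)
  (adj_irr : forall i, adj i i = false)
  (xy : x != y) (HV : unit_potential adj x y V).

Local Notation L := [set x; y].

Definition bdeg (i : 'I_n) : R :=
  (if adj i x then 1 else 0) + (if adj i y then 1 else 0).

Lemma notin_boundary j : (j \notin L) = (j != x) && (j != y).
Proof. by rewrite !inE negb_or. Qed.

Lemma split_boundary (F : 'I_n -> R) i :
  \rsum_(j | adj i j) F j = \rsum_(j | (j \notin L) && adj i j) F j +
    ((if adj i x then F x else 0) + (if adj i y then F y else 0)).
Proof.
rewrite (bigID (mem L)) /= Rplus_comm; congr (_ + _).
  by apply: eq_bigl => j; rewrite andbC.
rewrite big_mkcond (bigD1 x) //= (bigD1 y) 1?eq_sym //= big1 => [|j /andP[jx jy]].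
  by rewrite !inE !eqxx orbT Rplus_0_r; case: (adj i x); case: (adj i y).
by rewrite !inE (negbTE jx) (negbTE jy) andbF.
Qed.

Lemma degree_split i : INR (deg adj i) = ideg adj L i + bdeg i.
Proof. by rewrite /deg -rsum_card (split_boundary (fun _ => 1)). Qed.

Lemma bdeg_bounds i : 0 <= bdeg i <= 2.
Proof. by rewrite /bdeg; case: (adj i x); case: (adj i y); lra. Qed.

Lemma interior_harmonic j : j \notin L -> \rsum_(k | adj j k) (V j - V k) = 0.
Proof.
rewrite notin_boundary => /andP[jx jy]; case: HV => _ _ /(_ j jx jy) <-.
by apply: eq_bigr => k _; ring.
Qed.

(* Counting the edges between L and G - L from both sides. *)
Lemma bdeg_total : \rsum_(i | i \notin L) bdeg i = ideg adj L x + ideg adj L y.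
Proof.
rewrite rsum_add /ideg; congr (_ + _); rewrite -big_mkcondr;
  by apply: eq_bigl => j; rewrite adj_sym.
Qed.

(* Conservation of current: the current leaving x equals the current
   entering y (the total net current out of all vertices vanishes). *)
Lemma flow_conservation :
  \rsum_(j | (j \notin L) && adj x j) (1 - V j) = \rsum_(j | (j \notin L) && adj y j) V j.
Proof.
have [Vx Vy _] := HV.
pose out i := \rsum_(j | adj i j) (V i - V j).
have total : \rsum_(i | true) out i = 0.
  have reversed : \rsum_(i | true) out i = \rsum_(i | true) \rsum_(j | adj i j) (V j - V i).
    rewrite (exchange_big_dep xpredT) //=.
    by apply: eq_bigr => i _; apply: eq_bigl => j; rewrite adj_sym.
  suff : \rsum_(i | true) \rsum_(j | adj i j) (V j - V i) = - \rsum_(i | true) out i by lra.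
  rewrite -rsum_opp; apply: eq_bigr => i _; rewrite -rsum_opp.
  by apply: eq_bigr => j _; ring.
rewrite (bigD1 x) //= (bigD1 y) 1?eq_sym //= big1 in total; last first.
  by move=> i /andP[ix iy]; apply: interior_harmonic; rewrite notin_boundary ix iy.
rewrite /out !split_boundary !adj_irr (adj_sym y x) Vx Vy in total.
have -> : \rsum_(j | (j \notin L) && adj y j) V j =
          - \rsum_(j | (j \notin L) && adj y j) (0 - V j).
  by rewrite -rsum_opp; apply: eq_bigr => j _; ring.
by move: total; case: (adj x y); lra.
Qed.

Lemma flow_balance m eps : (forall j, j \notin L -> Rabs (V j - m) <= eps) ->
  Rabs (ideg adj L x - m * (ideg adj L x + ideg adj L y)) <=
  (ideg adj L x + ideg adj L y) * eps.
Proof.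
move=> close.
have near z : Rabs (\rsum_(j | (j \notin L) && adj z j) (V j - m)) <= ideg adj L z * eps.
  apply: Rle_trans (rsum_abs _ _) _; rewrite /ideg Rmult_comm -rsum_scal.
  by apply: rsum_le => j /andP[jL _]; rewrite Rmult_1_r; apply: close.
have balance : ideg adj L x - m * (ideg adj L x + ideg adj L y) =
    \rsum_(j | (j \notin L) && adj x j) (V j - m) +
    \rsum_(j | (j \notin L) && adj y j) (V j - m).
  have := flow_conservation; rewrite /ideg !rsum_sub !(rsum_const _ m).
  set dx := \rsum_(_ | _ && adj x _) 1; set dy := \rsum_(_ | _ && adj y _) 1.
  set Vx := \rsum_(_ | _ && adj x _) V _; set Vy := \rsum_(_ | _ && adj y _) V _.
  lra.
rewrite balance; apply: Rle_trans (Rabs_triang _ _) _.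
by have := near x; have := near y; lra.
Qed.

Hypothesis conn : P1 adj.

Lemma potential_range j : 0 <= V j <= 1.
Proof.
have [Vx Vy _] := HV.
have harmV i : i != x -> i != y -> \rsum_(k | adj i k) (V i - V k) = 0.
  by move=> ix iy; apply: interior_harmonic; rewrite notin_boundary ix iy.
have harmN i : i != x -> i != y -> \rsum_(k | adj i k) (- V i - - V k) = 0.
  move=> ix iy; rewrite -Ropp_0 -(harmV i ix iy) -rsum_opp.
  by apply: eq_bigr => k _; ring.
have := max_principle conn harmV j; have := max_principle conn harmN j.
by rewrite Vx Vy /Rmax; do 2 case: Rle_dec; lra.
Qed.

(* Step 3: testing Kirchhoff's law against V - m, half the Dirichlet energy
   on G - L equals minus the current through the edges to L weighted by
   V - m, which is at most sum_(i off L) bdeg i |V i - m|. *)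
Lemma energy_le_boundary m : 0 <= m <= 1 ->
  edge_sum adj L (fun i j => (V i - V j) ^ 2) / 2 <=
  \rsum_(i | i \notin L) (bdeg i * Rabs (V i - m)).
Proof.
move=> m01; have [Vx Vy _] := HV.
pose flux i := (if adj i x then (V i - m) * (V i - V x) else 0) +
               (if adj i y then (V i - m) * (V i - V y) else 0).
have kirchhoff : edge_sum adj L (fun i j => (V i - m) * (V i - V j)) +
                 \rsum_(i | i \notin L) flux i = 0.
  rewrite /edge_sum -rsum_add big1 // => i iL.
  have /= <- := split_boundary (fun j => (V i - m) * (V i - V j)) i.
  by rewrite rsum_scal interior_harmonic ?Rmult_0_r.
have symmetrize : edge_sum adj L (fun i j => (V i - m) * (V i - V j)) =
                  edge_sum adj L (fun i j => (V i - V j) ^ 2) / 2.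
  have sw := edge_sum_swap L adj_sym (fun i j => (V i - m) * (V i - V j)).
  have : edge_sum adj L (fun i j => (V i - m) * (V i - V j)) +
         edge_sum adj L (fun i j => (V j - m) * (V j - V i)) =
         edge_sum adj L (fun i j => (V i - V j) ^ 2).
    by rewrite -edge_sumD; apply: edge_sum_ext => i j _ _ _; ring.
  by rewrite -sw; lra.
have flux_bound : - (\rsum_(i | i \notin L) flux i) <=
                  \rsum_(i | i \notin L) (bdeg i * Rabs (V i - m)).
  rewrite -rsum_opp; apply: rsum_le => i _; have := potential_range i.
  rewrite /flux /bdeg Vx Vy; case: (adj i x); case: (adj i y); split_Rabs; nra.
lra.
Qed.

Lemma energy_bound m D : 0 <= m <= 1 -> 0 < D ->
  (forall i, i \notin L -> D <= ideg adj L i) ->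
  edge_sum adj L (fun i _ => (V i - m) ^ 2) <=
    144 * edge_sum adj L (fun i j => (V i - V j) ^ 2) ->
  edge_sum adj L (fun i j => (V i - V j) ^ 2) <= 1152 / D * (ideg adj L x + ideg adj L y).
Proof.
move=> m01 D0 Dideg poinc.
have weighted : \rsum_(i | i \notin L) (bdeg i * Rabs (V i - m)) <=
    288 / D * (ideg adj L x + ideg adj L y) +
    / 576 * edge_sum adj L (fun i _ => (V i - m) ^ 2).
  rewrite edge_sum_vertex -bdeg_total -!rsum_scal -rsum_add.
  apply: rsum_le => i iL; have [b0 b2] := bdeg_bounds i.
  have w2 : bdeg i ^ 2 <= 2 * bdeg i.
    by move: b0 b2; rewrite /bdeg; case: (adj i x); case: (adj i y); simpl; lra.
  by have := amgm_boundary (V i - m) D0 (Dideg i iL) b0 w2; lra.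
have := energy_le_boundary m01.
have : 0 < 1152 / D by apply: Rdiv_lt_0_compat; lra.
have -> : 1152 / D = 4 * (288 / D) by field; lra.
lra.
Qed.

(* Step 4 at one vertex: d(i) (V i - m) is the sum of the neighbours'
   deviations; split it into the boundary part and a part controlled by the
   variance sum_(j off L) (V j - m)^2. *)
Lemma vertex_estimate m l i : 0 <= m <= 1 -> 0 < l -> i \notin L ->
  INR (deg adj i) * Rabs (V i - m) <=
  2 + INR (deg adj i) / (2 * l) + l / 2 * \rsum_(j | j \notin L) (V j - m) ^ 2.
Proof.
move=> m01 l0 iL; have [Vx Vy _] := HV.
have average : INR (deg adj i) * (V i - m) = \rsum_(j | adj i j) (V j - m).
  rewrite (eq_bigr (fun j => (V i - m) - (V i - V j))) => [|j _]; last by ring.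
  by rewrite rsum_sub interior_harmonic // rsum_const /deg rsum_card; ring.
have boundary :
    Rabs ((if adj i x then V x - m else 0) + (if adj i y then V y - m else 0)) <= 2.
  by rewrite Vx Vy; case: (adj i x); case: (adj i y); split_Rabs; lra.
have interior : Rabs (\rsum_(j | (j \notin L) && adj i j) (V j - m)) <=
    / (2 * l) * ideg adj L i + l / 2 * \rsum_(j | j \notin L) (V j - m) ^ 2.
  apply: Rle_trans (rsum_abs _ _) _.
  apply: Rle_trans (_ : \rsum_(j | (j \notin L) && adj i j)
                          (/ (2 * l) * 1 + l / 2 * (V j - m) ^ 2) <= _).
    by apply: rsum_le => j _; have := abs_le_sq (V j - m) l0; lra.
  rewrite rsum_add !rsum_scal; apply: Rplus_le_compat_l; apply: Rmult_le_compat_l; first lra.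
  by apply: rsum_sub_le => j; apply: pow2_ge_0.
have ideg_le : ideg adj L i <= INR (deg adj i).
  by rewrite degree_split; have := bdeg_bounds i; lra.
rewrite -(Rabs_pos_eq _ (pos_INR (deg adj i))) -Rabs_mult average split_boundary.
apply: Rle_trans (Rabs_triang _ _) _.
have scale : / (2 * l) * ideg adj L i <= INR (deg adj i) / (2 * l).
  by rewrite Rmult_comm; apply: Rmult_le_compat_r => //; apply/Rlt_le/Rinv_0_lt_compat; lra.
rewrite (Rabs_pos_eq (INR _)); [lra | exact: pos_INR].
Qed.

Variables (c K l : R).
Hypotheses (c0 : 0 < c) (l0 : 0 < l) (cl4 : 4 <= c * l)
  (deg_bounds : forall i, c * l < INR (deg adj i) < K * l)
  (HP4 : P4 adj 1 1 2).

(* Deleting x and y costs at most two neighbours. *)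
Lemma ideg_lower i : c * l / 2 <= ideg adj L i.
Proof. by have := degree_split i; have := bdeg_bounds i; have := deg_bounds i; lra. Qed.

Lemma median_energy i0 : i0 \notin L ->
  exists2 m, 0 <= m <= 1 & edge_sum adj L (fun i _ => (V i - m) ^ 2) <= 663552 * K / c.
Proof.
move=> i0L.
have [k _ [above below]] : exists2 k, k \in ~: L &
    (2 * #|[set j in ~: L | rltb (V k) (V j)]| <= #|~: L|)%N /\
    (2 * #|[set j in ~: L | rltb (V j) (V k)]| <= #|~: L|)%N.
  by apply: median; apply/set0Pn; exists i0; rewrite inE.
have U_n : (#|~: L| <= n)%N by have := max_card (~: L); rewrite card_ord.
have expansion : expands adj L by apply: unit_expansion; rewrite // cards2; case: (x != y).
have poinc := poincare adj_sym expansion (leq_trans above U_n) (leq_trans below U_n).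
exists (V k); first exact: potential_range.
have D0 : 0 < c * l / 2 by nra.
have Q := energy_bound (potential_range k) D0 (fun i _ => ideg_lower i) poinc.
have s_upper : ideg adj L x + ideg adj L y <= 2 * K * l.
  have := degree_split x; have := degree_split y; have := bdeg_bounds x; have := bdeg_bounds y.
  by have := deg_bounds x; have := deg_bounds y; lra.
have : 1152 / (c * l / 2) * (ideg adj L x + ideg adj L y) <= 1152 / (c * l / 2) * (2 * K * l).
  by apply: Rmult_le_compat_l => //; apply: Rlt_le; apply: Rdiv_lt_0_compat; lra.
have -> : 663552 * K / c = 144 * (1152 / (c * l / 2) * (2 * K * l)) by field; lra.
lra.
Qed.

Lemma near_constant i0 : i0 \notin L -> exists2 m, 0 <= m <= 1 &
  forall j, j \notin L -> Rabs (V j - m) <= closeness_constant c K / l.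
Proof.
move=> i0L; have [m m01 X_upper] := median_energy i0L.
exists m => // j jL.
set X := edge_sum _ _ _ in X_upper.
have X0 : 0 <= X by apply: edge_sum_ge0 => i k _ _ _; apply: pow2_ge_0.
have spread : c * l / 2 * (\rsum_(i | i \notin L) (V i - m) ^ 2) <= X.
  rewrite /X edge_sum_vertex -rsum_scal; apply: rsum_le => i _.
  by apply: Rmult_le_compat_r; [apply: pow2_ge_0 | apply: ideg_lower].
have vertex : INR (deg adj j) * Rabs (V j - m) <= 2 + INR (deg adj j) / (2 * l) + X / c.
  have := vertex_estimate m01 l0 jL.
  have -> : X / c = l / 2 * (X / (c * l / 2)) by field; lra.
  suff : \rsum_(i | i \notin L) (V i - m) ^ 2 <= X / (c * l / 2) by nra.
  apply: (Rmult_le_reg_l (c * l / 2)); first nra.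
  by rewrite (_ : c * l / 2 * (X / (c * l / 2)) = X) //; field; lra.
have := scaled_vertex_bound l0 c0 (proj1 (deg_bounds j)) (Rabs_pos _) X0 vertex.
rewrite /closeness_constant => /Rle_trans; apply; apply: Rmult_le_compat_r.
  by apply: Rlt_le; apply: Rinv_0_lt_compat.
have : X / c ^ 2 <= 663552 * K / c / c ^ 2.
  by apply: Rmult_le_compat_r => //; apply: Rlt_le; apply: Rinv_0_lt_compat; nra.
lra.
Qed.

Lemma potential_estimate i : i != x -> i != y ->
  Rabs (V i - INR (deg adj x) / (INR (deg adj x) + INR (deg adj y))) <=
  (2 * closeness_constant c K + 1 / c) / l.
Proof.
move=> ix iy; have iL : i \notin L by rewrite notin_boundary ix iy.
have [m m01 close] := near_constant iL.
set eps := closeness_constant c K / l in close.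
set s := ideg adj L x + ideg adj L y.
have s_lower : c * l <= s by rewrite /s; have := ideg_lower x; have := ideg_lower y; lra.
have eps0 : 0 <= eps by have := close i iL; have := Rabs_pos (V i - m); lra.
pose a := if adj x y then 1 else 0.
have deg_xy : INR (deg adj x) = ideg adj L x + a /\ INR (deg adj y) = ideg adj L y + a.
  by rewrite !degree_split /bdeg !adj_irr (adj_sym y x) /a; case: (adj x y); split; ring.
have [-> ->] := deg_xy.
rewrite (_ : ideg adj L x + a + (ideg adj L y + a) = s + 2 * a); last by rewrite /s; ring.
have a01 : 0 <= a <= 1 by rewrite /a; case: (adj x y); lra.
have s0 : 0 < s by lra.
apply: Rle_trans (ratio_estimate s0 a01 m01 eps0 (close i iL) (flow_balance close)) _.
have : 1 / s <= 1 / (c * l).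
  by apply: Rmult_le_compat_l; [lra | apply: Rinv_le_contravar; nra].
have -> : (2 * closeness_constant c K + 1 / c) / l = 2 * eps + 1 / (c * l).
  by rewrite /eps; field; lra.
lra.
Qed.

End UnitNetwork.

(* The corollary: take l = ln n, c = delta C, K = 4 C, and n so large that
   delta C ln n >= 4. *)
Theorem corollary3p2 (C delta : R) (HC : (0 < C)) (Hd : (0 < delta)) :
  exists (M : R) (N0 : nat),
    forall (n : nat) (adj : rel 'I_n),
      (N0 <= n)%N ->
      simple_graph adj ->
      proper_graph adj 1 1 2 C delta ->
      forall (x y : 'I_n) (V : 'I_n -> R),
        x != y ->
        unit_potential adj x y V ->
        forall i : 'I_n, i != x -> i != y ->
          (Rabs (V i - INR (deg adj x) / (INR (deg adj x) + INR (deg adj y)))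
             <= M / ln (INR n)).
Proof.
have c0 : 0 < delta * C by apply: Rmult_lt_0_compat.
have [N0 N0_large] := INR_unbounded (exp (4 / (delta * C))).
exists (2 * closeness_constant (delta * C) (4 * C) + 1 / (delta * C)), N0.
move=> n adj Nn [adj_sym adj_irr] [conn _ _ HP4 HP5] x y V xy HV i ix iy.
have n_large : exp (4 / (delta * C)) < INR n by have := le_INR _ _ (elimT leP Nn); lra.
have ln_large : 4 / (delta * C) < ln (INR n).
  by rewrite -[X in X < _]ln_exp; apply: ln_increasing => //; apply: exp_pos.
have cl4 : 4 <= delta * C * ln (INR n).
  have -> : 4 = delta * C * (4 / (delta * C)) by field; lra.
  by apply: Rmult_le_compat_l; lra.
have l0 : 0 < ln (INR n).
  have : 0 < 4 / (delta * C) by apply: Rdiv_lt_0_compat; lra.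
  lra.
by apply: (potential_estimate adj_sym adj_irr xy HV conn c0 l0 cl4 HP5 HP4 ix iy).
Qed.
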